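(* For all integers $m,k,p\ge 0$, \begin{align*} &(-1)^{m+1}\sum_{i=0}^{m}\frac{(\ln 2)^i}{i!}\zeta(\bar 1,\{1\}_{m-i},p+3,\{1\}_k)+(-1)^{p+k+1}\sum_{i=0}^{k}\frac{(\ln 2)^i}{i!}\zeta(\bar 1,\{1\}_{k-i},p+3,\{1\}_m)\\ &=\frac{(-1)^m}{(m+1)!}(\ln 2)^{m+1}\zeta(\overline{p+3},\{1\}_k)+\frac{(-1)^{p+k}}{(k+1)!}(\ln 2)^{k+1}\zeta(\overline{p+3},\{1\}_m)\\ &\quad+\sum_{i=0}^{p}(-1)^i\zeta(\overline{2+i},\{1\}_m)\,\zeta(\overline{p+2-i},\{1\}_k). \end{align*}
   Context: For nonzero integers $s_1,\dots,s_k$, with $\operatorname{sgn}(s)=1$ if $s>0$ and $-1$ if $s<0$, the multiple zeta value is $\zeta(s_1,\dots,s_k)=\sum_{n_1>n_2>\cdots>n_k\ge 1}\prod_{j=1}^k n_j^{-|s_j|}\operatorname{sgn}(s_j)^{n_j}$. A barred entry $\bar q$ (e.g. $\bar 1$, $\overline{p+3}$) denotes the negative entry $-q$. The notation $\{1\}_d$ means the entry $1$ repeated $d$ times ($d=0$ means no entries). *)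

From Stdlib Require Import Reals ZArith List.
From Coquelicot Require Import Coquelicot.
Open Scope R_scope.

Definition mzv_term (s : Z) (n : nat) : R :=
  (if Z.ltb s 0 then -1 else 1) ^ n / (INR n) ^ (Z.abs_nat s).

(* Truncated (alternating) multiple zeta sum:
   mzv_trunc [s1;...;sk] N = sum_{N > n1 > n2 > ... > nk >= 1}
                               prod_j sgn(s_j)^{n_j} / n_j^{|s_j|}.
   mzv_trunc [] N = 1. *)
Fixpoint mzv_trunc (s : list Z) : nat -> R :=
  match s with
  | nil => fun _ => 1
  | a :: t =>
      fix go (N : nat) : R :=
        match N with
        | O => 0
        | S n => go n + (match n with
                         | O => 0
                         | _ => mzv_term a n * mzv_trunc t n
                         end)
        end
  end.

(* The multiple zeta value zeta(s1,...,sk), defined as the limit of the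
   nested partial sums over n1 < N (the standard meaning of the series,
   which converges conditionally e.g. for a leading entry bar 1). *)
Definition mzv (s : list Z) : R := real (Lim_seq (fun N => mzv_trunc s N)).

Definition ones (d : nat) : list Z := repeat 1%Z d.

(* Write ζ_N for a multiple zeta sum truncated to indices < N, fix q = p + 3 and let
   w(l) = ζ_l({1}_k) / l^q be the weights of ζ(q̄, {1}_k).  Splitting ζ(1̄, {1}_j, q, {1}_k) at
   the entry q turns it into Σ_l w(l) T_j(l), where T_j(l) is the tail of ζ(1̄, {1}_j) with all
   indices > l.  Hence the m-half of the left side, with the matching term of the right side moved
   over, is Σ_l (-1)^l w(l) B_m(l) for
     B_m(l) = (-1)^(l+m+1) Σ_i (ln 2)^i/i! T_(m-i)(l) - (-1)^m (ln 2)^(m+1)/(m+1)!.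
   Peeling off the smallest index gives B_m(l) + B_m(l+1) = 2 ζ(1̄, {1}_m) + B_(m-1)(l+1)/(l+1)
   (with B_(-1) = 1), and B_m(0) = 0 because ζ(1̄, {1}_j) = (-ln 2)^(j+1)/(j+1)! (compare the
   derivatives of Σ_n (-1)^n ζ_n({1}_j) v^n/n and of ln(1+v)^(j+1)) and (ln 2 - ln 2)^(m+1) = 0.
   The series Q_m(l) = Σ_n l (-1)^n ζ_n({1}_m) / (n (n+l)) satisfies the same recursion and
   Q_m(0) = 0, so B = Q; for truncated sums the discrepancy grows at most like √l, which the
   weights w(l) = O(√l / l^3) absorb.  Finally l / (n (n+l) l^q) plus its mirror image under
   (n, l, m, k) ↦ (l, n, k, m) splits by partial fractions into Σ_i (-1)^i n^-(2+i) l^-(p+2-i),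
   which produces the products on the right. *)

From Stdlib Require Import Reals ZArith List Lra Lia.
From Coquelicot Require Import Coquelicot.
Open Scope R_scope.

Fixpoint sumN (f : nat -> R) (N : nat) : R :=
  match N with O => 0 | S n => sumN f n + f n end.

Lemma sumN_S f N : sumN f (S N) = sumN f N + f N.
Proof. reflexivity. Qed.

Lemma sumN_ext f g N : (forall i, (i < N)%nat -> f i = g i) -> sumN f N = sumN g N.
Proof. induction N as [|N IH]; intros H; simpl; auto. rewrite IH, H; auto. Qed.

Lemma sumN_zero N : sumN (fun _ => 0) N = 0.
Proof. induction N as [|N IH]; simpl; [|rewrite IH]; lra. Qed.

Lemma sumN_plus f g N : sumN (fun i => f i + g i) N = sumN f N + sumN g N.
Proof. induction N as [|N IH]; simpl; [|rewrite IH]; lra. Qed.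

Lemma sumN_minus f g N : sumN (fun i => f i - g i) N = sumN f N - sumN g N.
Proof. induction N as [|N IH]; simpl; [|rewrite IH]; lra. Qed.

Lemma sumN_scal c f N : sumN (fun i => c * f i) N = c * sumN f N.
Proof. induction N as [|N IH]; simpl; [|rewrite IH]; lra. Qed.

Lemma sumN_le f g N : (forall i, (i < N)%nat -> f i <= g i) -> sumN f N <= sumN g N.
Proof.
  induction N as [|N IH]; intros H; simpl; [lra|].
  assert (f N <= g N) by (apply H; lia).
  assert (sumN f N <= sumN g N) by (apply IH; intros; apply H; lia).
  lra.
Qed.

Lemma sumN_nonneg f N : (forall i, (i < N)%nat -> 0 <= f i) -> 0 <= sumN f N.
Proof. intros H. rewrite <- (sumN_zero N). now apply sumN_le. Qed.

Lemma Rabs_sumN_le f N : Rabs (sumN f N) <= sumN (fun i => Rabs (f i)) N.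
Proof.
  induction N as [|N IH]; simpl.
  - rewrite Rabs_R0; lra.
  - eapply Rle_trans; [apply Rabs_triang | lra].
Qed.

Lemma sumN_swap (f : nat -> nat -> R) N M :
  sumN (fun i => sumN (fun j => f i j) M) N = sumN (fun j => sumN (fun i => f i j) N) M.
Proof.
  induction N as [|N IH]; simpl.
  - now rewrite sumN_zero.
  - now rewrite IH, sumN_plus.
Qed.

Lemma sumN_mult f g N M : sumN f N * sumN g M = sumN (fun i => sumN (fun j => f i * g j) M) N.
Proof. induction N as [|N IH]; simpl; [lra|]. rewrite <- IH, sumN_scal. lra. Qed.

Lemma sumN_shift f N : sumN f (S N) = f O + sumN (fun i => f (S i)) N.
Proof. induction N as [|N IH]; simpl in *; [lra|]. rewrite IH. lra. Qed.

Lemma sum_f_R0_sumN f n : sum_f_R0 f n = sumN f (S n).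
Proof. induction n as [|n IH]; simpl in *; [lra|]. now rewrite IH. Qed.

Lemma sumN_widen g n N : (n <= N)%nat ->
  sumN g n = sumN (fun i => if Nat.ltb i n then g i else 0) N.
Proof.
  induction N as [|N IH]; intros H.
  - now replace n with O by lia.
  - destruct (Nat.eq_dec n (S N)) as [->|Hn].
    + apply sumN_ext. intros i Hi. now replace (Nat.ltb i (S N)) with true by (symmetry; apply Nat.ltb_lt; lia).
    + simpl. rewrite <- IH by lia.
      replace (Nat.ltb N n) with false by (symmetry; apply Nat.ltb_ge; lia). lra.
Qed.

Lemma sumN_kronecker (f : nat -> R) a N :
  sumN (fun n => if Nat.eqb n a then f n else 0) N = if Nat.ltb a N then f a else 0.
Proof.
  induction N as [|N IH]; simpl; auto. rewrite IH.
  destruct (Nat.eqb_spec N a); destruct (Nat.ltb_spec a N); destruct (Nat.ltb_spec a (S N));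
    subst; try lia; lra.
Qed.

Lemma is_lim_seq_scal u a (l : R) : is_lim_seq u l -> is_lim_seq (fun n => a * u n) (a * l).
Proof. intros H. exact (is_lim_seq_scal_l u a l H). Qed.

Lemma is_lim_seq_sumN (f : nat -> nat -> R) (g : nat -> R) M :
  (forall j, (j < M)%nat -> is_lim_seq (fun N => f N j) (g j)) ->
  is_lim_seq (fun N => sumN (f N) M) (sumN g M).
Proof.
  induction M as [|M IH]; intros H; simpl.
  - apply is_lim_seq_const.
  - apply is_lim_seq_plus'; [apply IH; intros|]; apply H; lia.
Qed.

Definition mzv_summand (a : Z) (t : list Z) (n : nat) : R :=
  match n with O => 0 | _ => mzv_term a n * mzv_trunc t n end.

Lemma mzv_trunc_cons a t N : mzv_trunc (a :: t) N = sumN (mzv_summand a t) N.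
Proof.
  induction N as [|N IH]; [reflexivity|].
  change (mzv_trunc (a :: t) (S N)) with (mzv_trunc (a :: t) N + mzv_summand a t N).
  now rewrite IH.
Qed.

Fixpoint mzv_tail (s : list Z) (l N : nat) : R :=
  match s with
  | nil => 1
  | a :: s' => sumN (fun n => if Nat.ltb l n then mzv_term a n * mzv_tail s' l n else 0) N
  end.

Lemma mzv_tail_0 s N : mzv_tail s 0 N = mzv_trunc s N.
Proof.
  revert N; induction s as [|a s IH]; intros N; [reflexivity|].
  simpl mzv_tail. rewrite mzv_trunc_cons. apply sumN_ext. intros [|i] _; simpl; auto.
  now rewrite IH.
Qed.

Lemma mzv_trunc_app s a t N :
  mzv_trunc (s ++ a :: t) N = sumN (fun l => mzv_summand a t l * mzv_tail s l N) N.
Proof.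
  revert N; induction s as [|b s IH]; intros N.
  - simpl app. rewrite mzv_trunc_cons. apply sumN_ext. intros; simpl; lra.
  - simpl app. rewrite mzv_trunc_cons. simpl mzv_tail.
    transitivity (sumN (fun n => sumN (fun l => if Nat.ltb l n then mzv_term b n *
        (mzv_summand a t l * mzv_tail s l n) else 0) N) N).
    + apply sumN_ext. intros [|n] Hn; simpl mzv_summand at 1.
      * now rewrite sumN_zero.
      * rewrite IH, (sumN_widen _ (S n) N) by lia. rewrite <- sumN_scal.
        apply sumN_ext. intros l _. destruct (Nat.ltb l (S n)); lra.
    + rewrite sumN_swap. apply sumN_ext. intros l _. rewrite <- sumN_scal. apply sumN_ext.
      intros n _. destruct (Nat.ltb l n); lra.
Qed.

Lemma mzv_term_pos q n : (0 < q)%nat -> mzv_term (Z.of_nat q) n = / INR n ^ q.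
Proof.
  intros Hq. unfold mzv_term.
  replace (Z.ltb (Z.of_nat q) 0) with false by (symmetry; apply Z.ltb_ge; lia).
  rewrite Zabs2Nat.id, pow1. unfold Rdiv; ring.
Qed.

Lemma mzv_term_neg q n : (0 < q)%nat -> mzv_term (- Z.of_nat q) n = (-1) ^ n / INR n ^ q.
Proof.
  intros Hq. unfold mzv_term.
  replace (Z.ltb (- Z.of_nat q) 0) with true by (symmetry; apply Z.ltb_lt; lia).
  now replace (Z.abs_nat (- Z.of_nat q)) with q by lia.
Qed.

Lemma mzv_term_1 n : mzv_term 1%Z n = / INR n.
Proof. rewrite (mzv_term_pos 1) by lia. now rewrite pow_1. Qed.

Lemma mzv_term_m1 n : mzv_term (-1)%Z n = (-1) ^ n / INR n.
Proof. rewrite (mzv_term_neg 1) by lia. now rewrite pow_1. Qed.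

(** * Growth of ζ_n({1}_m) *)

Lemma Rinv_INR_nonneg n : 0 <= / INR n.
Proof.
  destruct n as [|n]; [simpl; rewrite Rinv_0; lra|].
  apply Rlt_le, Rinv_0_lt_compat, lt_0_INR; lia.
Qed.

Definition ones_trunc (m n : nat) : R := mzv_trunc (ones m) n.

(* Throughout, [x / INR 0 = 0] (as [/ 0 = 0]) silently discards the index [0]. *)
Lemma ones_trunc_S m n : ones_trunc (S m) (S n) = ones_trunc (S m) n + ones_trunc m n / INR n.
Proof.
  unfold ones_trunc. change (ones (S m)) with (1%Z :: ones m). rewrite !mzv_trunc_cons.
  simpl sumN at 1. f_equal. destruct n as [|n].
  - simpl. unfold Rdiv. rewrite Rinv_0. ring.
  - simpl mzv_summand. rewrite mzv_term_1. unfold Rdiv. ring.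
Qed.

Lemma ones_trunc_nonneg m n : 0 <= ones_trunc m n.
Proof.
  revert n; induction m as [|m IHm]; intros n; [unfold ones_trunc; simpl; lra|].
  induction n as [|n IHn]; [unfold ones_trunc; simpl; lra|].
  rewrite ones_trunc_S.
  assert (0 <= ones_trunc m n / INR n) by (apply Rmult_le_pos; [apply IHm | apply Rinv_INR_nonneg]).
  lra.
Qed.

(* Grows like [sqrt n]; the factor for [n' = 0] is [1] since [/ 0 = 0]. *)
Fixpoint wallis (n : nat) : R :=
  match n with O => 1 | S n' => wallis n' * (1 + / (2 * INR n')) end.

Lemma wallis_factor_ge1 n : 1 <= 1 + / (2 * INR n).
Proof.
  destruct n as [|n]; [simpl; rewrite Rmult_0_r, Rinv_0; lra|].
  assert (0 < INR (S n)) by (apply lt_0_INR; lia).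
  assert (0 < / (2 * INR (S n))) by (apply Rinv_0_lt_compat; lra). lra.
Qed.

Lemma wallis_ge1 n : 1 <= wallis n.
Proof. induction n as [|n IH]; simpl; [lra|]. pose proof (wallis_factor_ge1 n). nra. Qed.

Lemma wallis_le_S n : wallis n <= wallis (S n).
Proof. simpl. pose proof (wallis_ge1 n). pose proof (wallis_factor_ge1 n). nra. Qed.

Lemma wallis_S n : (1 <= n)%nat -> wallis (S n) = wallis n * (2 * INR n + 1) / (2 * INR n).
Proof. intros Hn. assert (0 < INR n) by (apply lt_0_INR; lia). simpl. field. lra. Qed.

Lemma wallis_sq_le n : wallis (S n) ^ 2 <= 2 * INR n + 1.
Proof.
  induction n as [|n IH]; [simpl; rewrite Rmult_0_r, Rinv_0; lra|].
  rewrite wallis_S, S_INR by lia.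
  pose proof (pos_INR n).
  replace ((wallis (S n) * (2 * (INR n + 1) + 1) / (2 * (INR n + 1))) ^ 2) with
    (wallis (S n) ^ 2 * (2 * INR n + 3) ^ 2 / (4 * (INR n + 1) ^ 2)) by (field; lra).
  apply Rcomplements.Rle_div_l; [nra|].
  apply Rle_trans with ((2 * INR n + 1) * (2 * INR n + 3) ^ 2); [|nra].
  apply Rmult_le_compat_r; nra.
Qed.

Lemma ones_trunc_le m n : ones_trunc m n <= 2 ^ m * wallis n.
Proof.
  revert m; induction n as [|n IH]; intros [|m].
  - unfold ones_trunc; simpl; lra.
  - unfold ones_trunc; simpl. pose proof (pow_lt 2 m ltac:(lra)). lra.
  - change (ones_trunc 0 (S n)) with 1. rewrite pow_O. pose proof (wallis_ge1 (S n)). lra.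
  - rewrite ones_trunc_S. simpl wallis.
    assert (ones_trunc m n / INR n <= 2 ^ m * wallis n / INR n)
      by (apply Rmult_le_compat_r; [apply Rinv_INR_nonneg | apply IH]).
    pose proof (IH (S m)).
    replace (2 ^ S m * (wallis n * (1 + / (2 * INR n)))) with
      (2 ^ S m * wallis n + 2 ^ m * wallis n / INR n).
    + lra.
    + destruct n as [|n].
      * simpl INR. rewrite Rmult_0_r. unfold Rdiv. rewrite Rinv_0. ring.
      * assert (0 < INR (S n)) by (apply lt_0_INR; lia). simpl pow. field. lra.
Qed.

Definition wallis_term (n : nat) : R := wallis n / INR n ^ 2.

Definition wallis_tail (n : nat) : R := 4 * wallis n / INR n.

Lemma wallis_term_nonneg n : 0 <= wallis_term n.
Proof.
  unfold wallis_term, Rdiv. pose proof (wallis_ge1 n). rewrite <- pow_inv.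
  apply Rmult_le_pos; [lra|]. apply pow_le, Rinv_INR_nonneg.
Qed.

Lemma wallis_tail_nonneg n : 0 <= wallis_tail n.
Proof. unfold wallis_tail, Rdiv. pose proof (wallis_ge1 n). pose proof (Rinv_INR_nonneg n). nra. Qed.

Lemma wallis_tail_step n : (1 <= n)%nat -> wallis_term n <= wallis_tail n - wallis_tail (S n).
Proof.
  intros Hn. unfold wallis_term, wallis_tail. rewrite wallis_S, S_INR by lia.
  assert (1 <= INR n) by (apply (le_INR 1); lia). pose proof (wallis_ge1 n).
  replace (4 * wallis n / INR n - 4 * (wallis n * (2 * INR n + 1) / (2 * INR n)) / (INR n + 1))
    with (wallis n / INR n ^ 2 + wallis n * (INR n - 1) / (INR n ^ 2 * (INR n + 1))) by (field; lra).
  assert (0 <= wallis n * (INR n - 1) / (INR n ^ 2 * (INR n + 1))) by (apply Rdiv_le_0_compat; nra).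
  lra.
Qed.

Lemma sumN_wallis_term_le N : sumN wallis_term N <= 4.
Proof.
  assert (H : forall M, sumN wallis_term (S M) <= 4 - wallis_tail (S M)).
  { induction M as [|M IH].
    - unfold wallis_term, wallis_tail, Rdiv; simpl. rewrite !Rmult_0_l, Rmult_0_r, !Rinv_0. lra.
    - rewrite sumN_S. pose proof (wallis_tail_step (S M) ltac:(lia)). lra. }
  destruct N as [|N]; [simpl; lra|].
  pose proof (H N). pose proof (wallis_tail_nonneg (S N)). lra.
Qed.

Lemma is_lim_seq_0_of_sq_le (u : nat -> R) K :
  (forall n, (1 <= n)%nat -> 0 <= u n /\ u n ^ 2 <= K / INR n) -> is_lim_seq u 0.
Proof.
  intros H. apply is_lim_seq_spec. intros eps.
  pose proof (cond_pos eps) as Heps.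
  assert (HK : 0 <= K) by (destruct (H 1%nat ltac:(lia)) as [_ H1]; simpl in H1; nra).
  destruct (nfloor_ex (K / (eps * eps))) as [N [_ HN]]; [apply Rdiv_le_0_compat; nra|].
  exists (S N). intros n Hn. destruct (H n ltac:(lia)) as [Hu Hsq].
  rewrite Rminus_0_r, Rabs_pos_eq by auto.
  assert (Hn' : K / (eps * eps) < INR n)
    by (rewrite <- S_INR in HN; apply Rlt_le_trans with (1 := HN), le_INR; lia).
  assert (Hpos : 0 < eps * eps) by nra.
  apply (Rcomplements.Rlt_div_l _ _ _ Hpos) in Hn'.
  assert (K / INR n < eps * eps) by (apply Rcomplements.Rlt_div_l; [apply lt_0_INR; lia | lra]).
  nra.
Qed.

Lemma wallis_tail_sq_le n : (1 <= n)%nat -> wallis_tail n ^ 2 <= 32 / INR n.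
Proof.
  intros Hn. destruct n as [|n]; [lia|]. unfold wallis_tail.
  pose proof (wallis_sq_le n). rewrite S_INR. pose proof (pos_INR n).
  replace ((4 * wallis (S n) / (INR n + 1)) ^ 2) with (16 * wallis (S n) ^ 2 / (INR n + 1) ^ 2) by (field; lra).
  apply Rcomplements.Rle_div_l; [nra|].
  replace (32 / (INR n + 1) * (INR n + 1) ^ 2) with (32 * (INR n + 1)) by (field; lra). nra.
Qed.

Lemma is_lim_seq_wallis_tail : is_lim_seq wallis_tail 0.
Proof.
  apply (is_lim_seq_0_of_sq_le _ 32). intros n Hn.
  split; [apply wallis_tail_nonneg | now apply wallis_tail_sq_le].
Qed.

Lemma ones_trunc_div_lim j : is_lim_seq (fun N => ones_trunc j N / INR (S N)) 0.
Proof.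
  apply (is_lim_seq_le_le (fun _ => 0) _ (fun N => 2 ^ j / 4 * wallis_tail (S N))).
  - intros N. assert (0 < INR (S N)) by (apply lt_0_INR; lia). split.
    + apply Rdiv_le_0_compat; [apply ones_trunc_nonneg | lra].
    + unfold wallis_tail. pose proof (ones_trunc_le j N). pose proof (wallis_le_S N).
      pose proof (pow_lt 2 j ltac:(lra)).
      replace (2 ^ j / 4 * (4 * wallis (S N) / INR (S N))) with (2 ^ j * wallis (S N) / INR (S N)) by (field; lra).
      apply Rmult_le_compat_r; [apply Rlt_le, Rinv_0_lt_compat; lra | nra].
  - apply is_lim_seq_const.
  - replace 0 with (2 ^ j / 4 * 0) by ring.
    apply is_lim_seq_scal, (is_lim_seq_incr_1 wallis_tail 0), is_lim_seq_wallis_tail.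
Qed.

(* Telescoping against [wallis_tail_step]. *)
Lemma ex_lim_seq_of_wallis_increments (u : nat -> R) K : 0 <= K ->
  (forall n, (1 <= n)%nat -> Rabs (u (S n) - u n) <= K * wallis_term n) ->
  exists L : R, is_lim_seq u L /\ forall n, (1 <= n)%nat -> Rabs (L - u n) <= K * wallis_tail n.
Proof.
  intros HK H.
  assert (Hd : forall n d, (1 <= n)%nat -> Rabs (u (d + n)%nat - u n) <= K * (wallis_tail n - wallis_tail (d + n))).
  { intros n d Hn. induction d as [|d IH]; [simpl; rewrite Rminus_eq_0, Rabs_R0; lra|].
    replace (u (S d + n)%nat - u n) with ((u (S (d + n)) - u (d + n)%nat) + (u (d + n)%nat - u n)) by (simpl; ring).
    eapply Rle_trans; [apply Rabs_triang|].
    pose proof (H (d + n)%nat ltac:(lia)). pose proof (wallis_tail_step (d + n) ltac:(lia)).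
    assert (K * wallis_term (d + n) <= K * (wallis_tail (d + n) - wallis_tail (S d + n)))
      by (apply Rmult_le_compat_l; auto). lra. }
  assert (Hd' : forall n d, (1 <= n)%nat -> Rabs (u (d + n)%nat - u n) <= K * wallis_tail n).
  { intros n d Hn. pose proof (Hd n d Hn). pose proof (wallis_tail_nonneg (d + n)). nra. }
  assert (Hcv : ex_finite_lim_seq u).
  { apply ex_lim_seq_cauchy_corr. intros eps.
    pose proof (is_lim_seq_scal _ K _ is_lim_seq_wallis_tail) as HL. rewrite Rmult_0_r in HL.
    apply is_lim_seq_spec in HL. destruct (HL (pos_div_2 eps)) as [N HN].
    exists (S N). intros n m Hn Hm. pose proof (HN (S N) ltac:(lia)) as HS. simpl in HS.
    rewrite Rminus_0_r in HS. pose proof (Rle_abs (K * wallis_tail (S N))).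
    pose proof (Hd' (S N) (n - S N)%nat ltac:(lia)). pose proof (Hd' (S N) (m - S N)%nat ltac:(lia)).
    replace (n - S N + S N)%nat with n in * by lia. replace (m - S N + S N)%nat with m in * by lia.
    replace (u n - u m) with ((u n - u (S N)) - (u m - u (S N))) by ring.
    eapply Rle_lt_trans; [apply Rabs_triang|]. rewrite Rabs_Ropp. lra. }
  destruct Hcv as [L HL]. exists L. split; auto. intros n Hn.
  assert (Habs : is_lim_seq (fun d => Rabs (u (d + n)%nat - u n)) (Rabs (L - u n))).
  { apply (is_lim_seq_abs _ (L - u n)), is_lim_seq_minus'; [|apply is_lim_seq_const].
    now apply (is_lim_seq_incr_n u n L) in HL. }
  exact (is_lim_seq_le _ _ _ _ (fun d => Hd' n d Hn) Habs (is_lim_seq_const _)).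
Qed.

(** * The values ζ(1̄, {1}_j) *)

Definition alt_poly (j N : nat) (v : R) : R :=
  sumN (fun n => (-1) ^ n * ones_trunc j n * v ^ n / INR n) N.

Definition alt_poly_deriv (j N : nat) (v : R) : R :=
  sumN (fun n => if Nat.eqb n 0 then 0 else (-1) ^ n * ones_trunc j n * v ^ (n - 1)) N.

Definition log_power (j : nat) (v : R) : R := (-1) ^ j * ln (1 + v) ^ j / INR (fact j).

Definition log_power_approx (j N : nat) (v : R) : R :=
  match j with O => 1 | S j' => alt_poly j' N v end.

Lemma mzv_trunc_alt_ones j N : mzv_trunc ((-1)%Z :: ones j) N = alt_poly j N 1.
Proof.
  rewrite mzv_trunc_cons. apply sumN_ext. intros [|n] _.
  - simpl. unfold Rdiv. rewrite Rinv_0. ring.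
  - simpl mzv_summand. rewrite mzv_term_m1, pow1. fold (ones_trunc j (S n)). unfold Rdiv. ring.
Qed.

Lemma is_derive_sumN (f : nat -> R -> R) (df : nat -> R -> R) N v :
  (forall n, is_derive (f n) v (df n v)) ->
  is_derive (fun x => sumN (fun n => f n x) N) v (sumN (fun n => df n v) N).
Proof.
  intros H. induction N as [|N IH]; simpl.
  - apply (is_derive_const 0 v).
  - now apply (is_derive_plus (fun x => sumN (fun n => f n x) N) (f N) v).
Qed.

Lemma alt_poly_derive j N v : is_derive (alt_poly j N) v (alt_poly_deriv j N v).
Proof.
  unfold alt_poly, alt_poly_deriv.
  apply (is_derive_sumN (fun n x => (-1) ^ n * ones_trunc j n * x ^ n / INR n)
    (fun n x => if Nat.eqb n 0 then 0 else (-1) ^ n * ones_trunc j n * x ^ (n - 1))).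
  intros [|n].
  - simpl. unfold Rdiv. rewrite Rinv_0.
    rewrite Rmult_0_r. apply (is_derive_const 0).
  - simpl Nat.eqb. cbv iota. assert (INR (S n) <> 0) by (apply not_0_INR; lia).
    auto_derive; auto. change (match n with 0%nat => 1 | S _ => INR n + 1 end) with (INR (S n)).
    replace (S n - 1)%nat with n by lia. simpl pow. field. auto.
Qed.

Lemma alt_poly_deriv_mul j N v :
  (1 + v) * alt_poly_deriv j (S N) v = - log_power_approx j N v + (-1) ^ N * ones_trunc j N * v ^ N.
Proof.
  induction N as [|N IH].
  - unfold alt_poly_deriv, log_power_approx. destruct j as [|j]; simpl.
    + change (ones_trunc 0 0) with 1. ring.
    + unfold alt_poly. simpl. change (ones_trunc (S j) 0) with 0. ring.
  - unfold alt_poly_deriv in *. rewrite sumN_S, Rmult_plus_distr_l, IH.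
    simpl Nat.eqb. cbv iota. replace (S N - 1)%nat with N by lia.
    destruct j as [|j]; simpl log_power_approx.
    + change (ones_trunc 0 ?n) with 1. simpl pow. ring.
    + unfold alt_poly. rewrite sumN_S, ones_trunc_S. simpl pow. destruct N as [|N].
      * simpl INR. unfold Rdiv. rewrite Rinv_0. change (ones_trunc (S j) 0) with 0. ring.
      * assert (INR (S N) <> 0) by (apply not_0_INR; lia). field. auto.
Qed.

Lemma log_power_derive j v : -1 < v -> is_derive (log_power (S j)) v (- log_power j v / (1 + v)).
Proof.
  intros Hv. unfold log_power. auto_derive; [lra|].
  change (fact j + j * fact j)%nat with (S j * fact j)%nat. rewrite mult_INR.
  change (match j with 0%nat => 1 | S _ => INR j + 1 end) with (INR (S j)).
  pose proof (INR_fact_neq_0 j). assert (INR (S j) <> 0) by (apply not_0_INR; lia).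
  field. repeat split; auto; lra.
Qed.

Lemma Rabs_le_of_derive_le (F G dF dG : R -> R) a b :
  (forall v, a <= v <= b -> is_derive F v (dF v)) ->
  (forall v, a <= v <= b -> is_derive G v (dG v)) ->
  F a = 0 -> G a = 0 -> (forall v, a <= v <= b -> Rabs (dF v) <= dG v) ->
  forall v, a <= v <= b -> Rabs (F v) <= G v.
Proof.
  intros HF HG Fa Ga Hd v Hv.
  destruct (Req_dec v a) as [->|Hva]; [rewrite Fa, Ga, Rabs_R0; lra|].
  assert (Hs : forall s : R, (s = 1 \/ s = -1) -> 0 <= G v - s * F v).
  { intros s Hs.
    assert (HD : forall x, a <= x <= v -> is_derive (fun x => G x - s * F x) x (dG x - s * dF x)).
    { intros x Hx. apply (is_derive_minus G (fun x => s * F x)); [apply HG; lra|].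
      apply is_derive_scal, HF. lra. }
    destruct (MVT_gen (fun x => G x - s * F x) a v (fun x => dG x - s * dF x)) as [c [Hc Hm]].
    - intros x Hx. rewrite Rmin_left, Rmax_right in Hx by lra. apply HD. lra.
    - intros x Hx. rewrite Rmin_left, Rmax_right in Hx by lra. apply continuity_pt_filterlim.
      apply (ex_derive_continuous (fun x => G x - s * F x)). eexists. apply HD. lra.
    - rewrite Rmin_left, Rmax_right in Hc by lra. rewrite Fa, Ga in Hm.
      pose proof (Hd c ltac:(lra)) as Hdc. apply Rabs_le_between in Hdc.
      assert (0 <= dG c - s * dF c) by (destruct Hs; subst; lra). nra. }
  pose proof (Hs 1 (or_introl eq_refl)). pose proof (Hs (-1) (or_intror eq_refl)).
  apply Rabs_le; lra.
Qed.

Lemma pow_unit_interval x k : 0 <= x <= 1 -> 0 <= x ^ k <= 1.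
Proof. intros H; induction k; simpl; nra. Qed.

Lemma ln2_lt_1 : ln 2 < 1.
Proof.
  rewrite <- (ln_exp 1). apply ln_increasing; [lra|].
  pose proof (exp_ineq1 1 ltac:(lra)). lra.
Qed.

Lemma log_power_bound j v : 0 <= v <= 1 -> Rabs (log_power j v) <= 1.
Proof.
  intros Hv. unfold log_power.
  assert (Hln : 0 <= ln (1 + v) <= 1).
  { split; [rewrite <- ln_1; apply ln_le; lra|].
    pose proof ln2_lt_1. assert (ln (1 + v) <= ln 2) by (apply ln_le; lra). lra. }
  pose proof (pow_unit_interval _ j Hln).
  assert (1 <= INR (fact j)) by (apply (le_INR 1); pose proof (lt_O_fact j); lia).
  assert (/ INR (fact j) <= 1) by (rewrite <- Rinv_1; apply Rinv_le_contravar; lra).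
  assert (0 <= / INR (fact j)) by (apply Rlt_le, Rinv_0_lt_compat; lra).
  unfold Rdiv. rewrite !Rabs_mult, pow_1_abs, Rabs_pos_eq by lra.
  rewrite Rabs_inv, Rabs_pos_eq by lra. nra.
Qed.

Lemma alt_poly_at_0 j N : alt_poly j N 0 = 0.
Proof.
  unfold alt_poly. transitivity (sumN (fun _ => 0) N); [apply sumN_ext | apply sumN_zero].
  intros [|n] _.
  - simpl. unfold Rdiv. rewrite Rinv_0. ring.
  - rewrite pow_i by lia. unfold Rdiv. ring.
Qed.

(* Integrates the bound [d] on [log_power_approx j N] over [0, v], using [alt_poly_deriv_mul]. *)
Lemma alt_poly_log_power_le j N d :
  (forall x, 0 <= x <= 1 -> Rabs (log_power_approx j N x - log_power j x) <= d) ->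
  forall v, 0 <= v <= 1 ->
  Rabs (alt_poly j (S N) v - log_power (S j) v) <= d * v + ones_trunc j N * v ^ S N / INR (S N).
Proof.
  intros Hd. assert (HN : INR (S N) <> 0) by (apply not_0_INR; lia).
  pose proof (ones_trunc_nonneg j N) as He.
  apply (Rabs_le_of_derive_le (fun x => alt_poly j (S N) x - log_power (S j) x)
    (fun x => d * x + ones_trunc j N * x ^ S N / INR (S N))
    (fun x => alt_poly_deriv j (S N) x - (- log_power j x / (1 + x)))
    (fun x => d + ones_trunc j N * x ^ N)).
  - intros x Hx. apply (is_derive_minus (alt_poly j (S N)) (log_power (S j))).
    + apply alt_poly_derive.
    + apply log_power_derive. lra.
  - intros x Hx. auto_derive; auto.
    change (match N with 0%nat => 1 | S _ => INR N + 1 end) with (INR (S N)). field. auto.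
  - rewrite alt_poly_at_0. unfold log_power. rewrite Rplus_0_r, ln_1, pow_i by lia.
    unfold Rdiv. ring.
  - rewrite pow_i by lia. unfold Rdiv. ring.
  - intros x Hx. specialize (Hd x Hx).
    assert (Hx1 : 0 < 1 + x) by lra.
    assert (HD : alt_poly_deriv j (S N) x
                 = (- log_power_approx j N x + (-1) ^ N * ones_trunc j N * x ^ N) / (1 + x))
      by (rewrite <- alt_poly_deriv_mul; field; lra).
    rewrite HD.
    replace ((- log_power_approx j N x + (-1) ^ N * ones_trunc j N * x ^ N) / (1 + x) - - log_power j x / (1 + x))
      with ((- (log_power_approx j N x - log_power j x) + (-1) ^ N * ones_trunc j N * x ^ N) / (1 + x))
      by (field; lra).
    assert (Hnum : Rabs (- (log_power_approx j N x - log_power j x) + (-1) ^ N * ones_trunc j N * x ^ N)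
                   <= d + ones_trunc j N * x ^ N).
    { eapply Rle_trans; [apply Rabs_triang|]. rewrite Rabs_Ropp, !Rabs_mult, pow_1_abs.
      rewrite (Rabs_pos_eq (ones_trunc j N)), (Rabs_pos_eq (x ^ N)) by (auto; apply pow_le; lra).
      lra. }
    unfold Rdiv. rewrite Rabs_mult, Rabs_inv, (Rabs_pos_eq (1 + x)) by lra.
    assert (/ (1 + x) <= 1) by (rewrite <- Rinv_1; apply Rinv_le_contravar; lra).
    assert (0 < / (1 + x)) by (apply Rinv_0_lt_compat; lra).
    pose proof (Rabs_pos (- (log_power_approx j N x - log_power j x) + (-1) ^ N * ones_trunc j N * x ^ N)).
    pose proof (pow_le x N ltac:(lra)). nra.
Qed.

Lemma log_power_approx_uniform j : exists d : nat -> R, is_lim_seq d 0 /\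
  forall N v, 0 <= v <= 1 -> Rabs (log_power_approx j N v - log_power j v) <= d N.
Proof.
  induction j as [|j [d [Hd Hb]]].
  - exists (fun _ => 0). split; [apply is_lim_seq_const|]. intros N v _.
    unfold log_power_approx, log_power. simpl. replace (1 - 1 * 1 / 1) with 0 by field.
    rewrite Rabs_R0; lra.
  - exists (fun N => match N with O => 1 | S N' => d N' + ones_trunc j N' / INR (S N') end). split.
    + apply is_lim_seq_incr_1. replace (Finite 0) with (Rbar_plus 0 0) by (simpl; f_equal; ring).
      apply is_lim_seq_plus'; [exact Hd | apply ones_trunc_div_lim].
    + intros [|N] v Hv; simpl log_power_approx.
      * unfold alt_poly. simpl sumN. rewrite Rminus_0_l, Rabs_Ropp. now apply log_power_bound.
      * pose proof (alt_poly_log_power_le j N (d N) (Hb N) v Hv).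
        pose proof (pow_unit_interval v (S N) Hv). pose proof (ones_trunc_nonneg j N).
        assert (0 <= d N) by (eapply Rle_trans; [apply Rabs_pos | apply (Hb N 0); lra]).
        assert (ones_trunc j N * v ^ S N / INR (S N) <= ones_trunc j N / INR (S N))
          by (unfold Rdiv; apply Rmult_le_compat_r; [apply Rinv_INR_nonneg | nra]).
        nra.
Qed.

Lemma is_lim_seq_alt_poly m : is_lim_seq (fun N => alt_poly m N 1) (log_power (S m) 1).
Proof.
  destruct (log_power_approx_uniform (S m)) as [d [Hd Hb]].
  apply is_lim_seq_spec. intros eps. apply is_lim_seq_spec in Hd. destruct (Hd eps) as [N HN].
  exists N. intros n Hn. specialize (HN n Hn). specialize (Hb n 1 ltac:(lra)). simpl in Hb.
  rewrite Rminus_0_r in HN. pose proof (Rle_abs (d n)). lra.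
Qed.

(** * Tails and their recursion in the lower bound *)

Lemma sumN_split_first (g : nat -> R) l N :
  sumN (fun n => if Nat.ltb l n then g n else 0) N
  = (if Nat.ltb (S l) N then g (S l) else 0) + sumN (fun n => if Nat.ltb (S l) n then g n else 0) N.
Proof.
  rewrite <- (sumN_kronecker g (S l) N), <- sumN_plus. apply sumN_ext. intros n _.
  destruct (Nat.eqb_spec n (S l)) as [->|Hn].
  - rewrite (proj2 (Nat.ltb_lt l (S l))), (proj2 (Nat.ltb_ge (S l) (S l))) by lia. lra.
  - destruct (Nat.ltb_spec l n); destruct (Nat.ltb_spec (S l) n); try lia; lra.
Qed.

Lemma sumN_gt_empty (g : nat -> R) a N :
  (N <= S a)%nat -> sumN (fun n => if Nat.ltb a n then g n else 0) N = 0.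
Proof.
  intros HN. transitivity (sumN (fun _ => 0) N); [|apply sumN_zero].
  apply sumN_ext. intros n Hn. now rewrite (proj2 (Nat.ltb_ge a n)) by lia.
Qed.

Lemma mzv_tail_cons_sum a s l N :
  mzv_tail (a :: s) l N = sumN (fun n => if Nat.ltb l n then mzv_term a n * mzv_tail s l n else 0) N.
Proof. reflexivity. Qed.

Lemma mzv_tail_cons a s l N :
  mzv_tail (a :: s) l N = (if Nat.ltb (S l) N then mzv_term a (S l) * mzv_tail s l (S l) else 0)
    + sumN (fun n => if Nat.ltb (S l) n then mzv_term a n * mzv_tail s l n else 0) N.
Proof. apply sumN_split_first. Qed.

Lemma mzv_tail_ones_empty j l : mzv_tail (ones (S j)) l (S l) = 0.
Proof. apply sumN_gt_empty. lia. Qed.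

(* Peeling off the smallest index of [{1}_(j+1)] in the case where it equals [l + 1]. *)
Lemma mzv_tail_ones_S j l n :
  mzv_tail (ones (S j)) l n
  = mzv_tail (ones (S j)) (S l) n + (if Nat.ltb (S l) n then mzv_tail (ones j) (S l) n / INR (S l) else 0).
Proof.
  assert (Hl : INR (S l) <> 0) by (apply not_0_INR; lia).
  revert n; induction j as [|j IH]; intros n.
  - change (ones 1) with (1%Z :: nil). rewrite mzv_tail_cons, mzv_term_1. simpl mzv_tail.
    destruct (Nat.ltb (S l) n); unfold Rdiv; ring.
  - change (ones (S (S j))) with (1%Z :: ones (S j)). rewrite mzv_tail_cons, mzv_tail_ones_empty.
    change (mzv_tail (1%Z :: ones (S j)) (S l) n)
      with (sumN (fun i => if Nat.ltb (S l) i then mzv_term 1 i * mzv_tail (ones (S j)) (S l) i else 0) n).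
    change (mzv_tail (ones (S j)) (S l) n)
      with (sumN (fun i => if Nat.ltb (S l) i then mzv_term 1 i * mzv_tail (ones j) (S l) i else 0) n).
    transitivity (sumN (fun i => (if Nat.ltb (S l) i then mzv_term 1 i * mzv_tail (ones (S j)) (S l) i else 0)
      + / INR (S l) * (if Nat.ltb (S l) i then mzv_term 1 i * mzv_tail (ones j) (S l) i else 0)) n).
    + replace (if Nat.ltb (S l) n then mzv_term 1 (S l) * 0 else 0) with 0
        by (destruct (Nat.ltb (S l) n); ring).
      rewrite Rplus_0_l. apply sumN_ext. intros i _. rewrite IH.
      destruct (Nat.ltb (S l) i); [field; auto | ring].
    + rewrite sumN_plus, sumN_scal. destruct (Nat.ltb_spec (S l) n).
      * unfold Rdiv. ring.
      * rewrite !sumN_gt_empty by lia. ring.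
Qed.

Definition alt_tail (N j l : nat) : R := mzv_tail ((-1)%Z :: ones j) l N.

Lemma alt_tail_at_0 N j : alt_tail N j 0 = alt_poly j N 1.
Proof. unfold alt_tail. now rewrite mzv_tail_0, mzv_trunc_alt_ones. Qed.

Lemma alt_tail_0_S N l :
  alt_tail N 0 l = alt_tail N 0 (S l) + (if Nat.ltb (S l) N then (-1) ^ (S l) / INR (S l) else 0).
Proof.
  unfold alt_tail. rewrite mzv_tail_cons, mzv_term_m1. simpl mzv_tail.
  destruct (Nat.ltb (S l) N); ring.
Qed.

Lemma alt_tail_S_S N j l : alt_tail N (S j) l = alt_tail N (S j) (S l) + alt_tail N j (S l) / INR (S l).
Proof.
  assert (Hl : INR (S l) <> 0) by (apply not_0_INR; lia).
  unfold alt_tail. rewrite mzv_tail_cons, mzv_tail_ones_empty.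
  replace (if Nat.ltb (S l) N then mzv_term (-1) (S l) * 0 else 0) with 0
    by (destruct (Nat.ltb (S l) N); ring).
  rewrite !(mzv_tail_cons_sum _ _ (S l)).
  unfold Rdiv. rewrite Rplus_0_l, Rmult_comm, <- sumN_scal, <- sumN_plus.
  apply sumN_ext. intros i _. rewrite mzv_tail_ones_S.
  destruct (Nat.ltb (S l) i); [field; auto | ring].
Qed.

Definition ln2_coef (i : nat) : R := ln 2 ^ i / INR (fact i).

Lemma log_power_at_1 m : log_power (S m) 1 = - (-1) ^ m * ln2_coef (S m).
Proof. unfold log_power, ln2_coef. replace (1 + 1) with 2 by lra. simpl pow. unfold Rdiv. ring. Qed.

Definition alt_tail_mix (N m l : nat) : R := sumN (fun i => ln2_coef i * alt_tail N (m - i) l) (S m).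

Lemma alt_tail_mix_S N m l :
  alt_tail_mix N m l = alt_tail_mix N m (S l)
    + (match m with O => 0 | S m' => alt_tail_mix N m' (S l) / INR (S l) end)
    + ln2_coef m * (if Nat.ltb (S l) N then (-1) ^ (S l) / INR (S l) else 0).
Proof.
  unfold alt_tail_mix. rewrite !sumN_S, !Nat.sub_diag, alt_tail_0_S.
  destruct m as [|m]; [simpl; ring|].
  replace (sumN (fun i => ln2_coef i * alt_tail N (S m - i) l) (S m)) with
    (sumN (fun i => ln2_coef i * alt_tail N (S m - i) (S l)) (S m)
     + sumN (fun i => ln2_coef i * alt_tail N (m - i) (S l)) (S m) / INR (S l)); [ring|].
  unfold Rdiv. rewrite Rmult_comm, <- sumN_scal, <- sumN_plus. apply sumN_ext. intros i Hi.
  replace (S m - i)%nat with (S (m - i)) by lia. rewrite (alt_tail_S_S N (m - i) l).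
  field. apply not_0_INR; lia.
Qed.

Definition signed_tail_mix (N m l : nat) : R :=
  (-1) ^ (l + m + 1) * alt_tail_mix N m l - (-1) ^ m * ln2_coef (S m).

Lemma pow_neg1_cases l : (-1) ^ l = 1 \/ (-1) ^ l = -1.
Proof. induction l as [|l [H|H]]; simpl; [left | right | left]; try rewrite H; lra. Qed.

Lemma signed_tail_mix_S_add N m l : (S l < N)%nat ->
  signed_tail_mix N m l + signed_tail_mix N m (S l) = -2 * (-1) ^ m * ln2_coef (S m) +
    (match m with O => / INR (S l) | S m' => signed_tail_mix N m' (S l) / INR (S l) end).
Proof.
  intros Hl. unfold signed_tail_mix. rewrite alt_tail_mix_S, (proj2 (Nat.ltb_lt (S l) N)) by lia.
  assert (INR (S l) <> 0) by (apply not_0_INR; lia).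
  destruct m as [|m].
  - unfold ln2_coef at 1. rewrite !Nat.add_0_r, !pow_add. simpl fact. simpl pow. change (INR 1) with 1.
    destruct (pow_neg1_cases l) as [->| ->]; field; auto.
  - replace (S l + m + 1)%nat with (l + S m + 1)%nat by lia. rewrite !pow_add. simpl pow.
    destruct (pow_neg1_cases l) as [->| ->]; destruct (pow_neg1_cases m) as [->| ->]; field; auto.
Qed.

(** * The comparison series Q_m(l) *)

Definition q_summand (m l n : nat) : R :=
  INR l * (-1) ^ n * ones_trunc m n / (INR n * (INR n + INR l)).

Definition q_partial (m l N : nat) : R := sumN (q_summand m l) N.

Lemma q_summand_0 m l : q_summand m l 0 = 0.
Proof. unfold q_summand. simpl INR. rewrite Rmult_0_l. unfold Rdiv. rewrite Rinv_0. ring. Qed.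

Lemma q_partial_S_add m l N :
  q_partial m (S l) (S N) + q_partial m l (S N)
  = 2 * alt_poly m (S N) 1
    + (match m with O => / INR (S l) | S m' => q_partial m' (S l) N / INR (S l) end)
    - (-1) ^ N * ones_trunc m N / (INR N + 1 + INR l).
Proof.
  pose proof (pos_INR l). unfold q_partial, alt_poly.
  induction N as [|N IH].
  - cbn [sumN]. rewrite !q_summand_0. unfold Rdiv. change (INR 0) with 0. rewrite Rinv_0, S_INR.
    destruct m as [|m]; [change (ones_trunc 0 0) with 1 | change (ones_trunc (S m) 0) with 0];
      field; lra.
  - rewrite (sumN_S (q_summand m (S l)) (S N)), (sumN_S (q_summand m l) (S N)), (sumN_S _ (S N)).
    replace (sumN (q_summand m (S l)) (S N) + q_summand m (S l) (S N)
             + (sumN (q_summand m l) (S N) + q_summand m l (S N)))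
      with ((sumN (q_summand m (S l)) (S N) + sumN (q_summand m l) (S N))
            + (q_summand m (S l) (S N) + q_summand m l (S N))) by ring.
    rewrite IH. clear IH. pose proof (pos_INR N). rewrite pow1.
    destruct m as [|m].
    + unfold q_summand. rewrite !S_INR. change (ones_trunc 0 ?n) with 1. simpl pow. field. repeat split; lra.
    + rewrite (sumN_S (q_summand m (S l))). unfold q_summand. rewrite ones_trunc_S, !S_INR.
      destruct N as [|N].
      * cbn [sumN pow]. change (INR 0) with 0. change (ones_trunc (S m) 0) with 0.
        unfold Rdiv. rewrite !Rmult_0_l, !Rinv_0. field. lra.
      * rewrite !S_INR. pose proof (pos_INR N). simpl pow. field. repeat split; lra.
Qed.

Lemma q_summand_bound m l n : Rabs (q_summand m l n) <= INR l * 2 ^ m * wallis_term n.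
Proof.
  destruct n as [|n].
  - rewrite q_summand_0, Rabs_R0. pose proof (wallis_term_nonneg 0). pose proof (pos_INR l).
    pose proof (pow_le 2 m ltac:(lra)). assert (0 <= INR l * 2 ^ m) by nra. nra.
  - unfold q_summand, wallis_term. set (x := INR (S n)).
    assert (Hx : 1 <= x) by (apply (le_INR 1); lia).
    pose proof (pos_INR l). pose proof (ones_trunc_nonneg m (S n)). pose proof (ones_trunc_le m (S n)).
    replace (INR l * (-1) ^ S n * ones_trunc m (S n) / (x * (x + INR l)))
      with ((-1) ^ S n * ((INR l * ones_trunc m (S n) / x ^ 2) * (x / (x + INR l)))) by (field; lra).
    rewrite Rabs_mult, pow_1_abs, Rmult_1_l, Rabs_pos_eq
      by (apply Rmult_le_pos; apply Rdiv_le_0_compat; nra).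
    assert (x / (x + INR l) <= 1) by (apply Rcomplements.Rle_div_l; nra).
    assert (0 <= x / (x + INR l)) by (apply Rdiv_le_0_compat; nra).
    assert (INR l * ones_trunc m (S n) / x ^ 2 <= INR l * 2 ^ m * (wallis (S n) / x ^ 2)).
    { replace (INR l * 2 ^ m * (wallis (S n) / x ^ 2)) with (INR l * (2 ^ m * wallis (S n)) / x ^ 2)
        by (field; lra).
      apply Rmult_le_compat_r; [apply Rlt_le, Rinv_0_lt_compat; nra | apply Rmult_le_compat_l; auto]. }
    assert (0 <= INR l * ones_trunc m (S n) / x ^ 2) by (apply Rdiv_le_0_compat; nra).
    nra.
Qed.

Definition q_series (m l : nat) : R := real (Lim_seq (q_partial m l)).

Lemma q_partial_conv m l : exists L : R, is_lim_seq (q_partial m l) L /\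
  forall n, (1 <= n)%nat -> Rabs (L - q_partial m l n) <= INR l * 2 ^ m * wallis_tail n.
Proof.
  apply ex_lim_seq_of_wallis_increments.
  - pose proof (pos_INR l). pose proof (pow_le 2 m ltac:(lra)). nra.
  - intros n _. unfold q_partial. rewrite sumN_S.
    replace (sumN (q_summand m l) n + q_summand m l n - sumN (q_summand m l) n) with (q_summand m l n) by ring.
    apply q_summand_bound.
Qed.

Lemma is_lim_seq_q_series m l : is_lim_seq (q_partial m l) (q_series m l).
Proof.
  destruct (q_partial_conv m l) as [L [HL _]]. unfold q_series.
  now rewrite (is_lim_seq_unique _ _ HL).
Qed.

Lemma q_series_tail_bound m l n : (1 <= n)%nat ->
  Rabs (q_series m l - q_partial m l n) <= INR l * 2 ^ m * wallis_tail n.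
Proof.
  destruct (q_partial_conv m l) as [L [HL HB]]. unfold q_series.
  rewrite (is_lim_seq_unique _ _ HL). apply HB.
Qed.

Lemma q_series_at_0 m : q_series m 0 = 0.
Proof.
  unfold q_series. rewrite (is_lim_seq_unique _ 0); [reflexivity|].
  apply (is_lim_seq_ext (fun _ => 0)); [|apply is_lim_seq_const].
  intros N. unfold q_partial. rewrite <- (sumN_zero N) at 1. apply sumN_ext. intros n _.
  unfold q_summand. simpl INR. unfold Rdiv. ring.
Qed.

Lemma q_series_S_add m l :
  q_series m (S l) + q_series m l = -2 * (-1) ^ m * ln2_coef (S m) +
    (match m with O => / INR (S l) | S m' => q_series m' (S l) / INR (S l) end).
Proof.
  assert (Hsum : is_lim_seq (fun N => q_partial m (S l) (S N) + q_partial m l (S N))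
                            (q_series m (S l) + q_series m l)).
  { apply is_lim_seq_plus'; apply (is_lim_seq_incr_1 (q_partial _ _)); apply is_lim_seq_q_series. }
  apply (is_lim_seq_ext _ _ _ (fun N => q_partial_S_add m l N)) in Hsum.
  assert (Hlog : is_lim_seq (fun N => 2 * alt_poly m (S N) 1) (-2 * (-1) ^ m * ln2_coef (S m))).
  { replace (-2 * (-1) ^ m * ln2_coef (S m)) with (2 * log_power (S m) 1) by (rewrite log_power_at_1; ring).
    apply is_lim_seq_scal, (is_lim_seq_incr_1 (fun N => alt_poly m N 1)), is_lim_seq_alt_poly. }
  assert (Hrec : is_lim_seq (fun N => match m with O => / INR (S l) | S m' => q_partial m' (S l) N / INR (S l) end)
                   (Finite (match m with O => / INR (S l) | S m' => q_series m' (S l) / INR (S l) end))).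
  { destruct m as [|m]; [apply is_lim_seq_const|].
    apply (is_lim_seq_scal_r _ (/ INR (S l)) (q_series m (S l))), is_lim_seq_q_series. }
  assert (Hlast : is_lim_seq (fun N => (-1) ^ N * ones_trunc m N / (INR N + 1 + INR l)) 0).
  { apply is_lim_seq_abs_0, (is_lim_seq_le_le (fun _ => 0) _ (fun N => ones_trunc m N / INR (S N)));
      [|apply is_lim_seq_const | apply ones_trunc_div_lim].
    intros N. split; [apply Rabs_pos|]. rewrite S_INR. pose proof (pos_INR N). pose proof (pos_INR l).
    unfold Rdiv. rewrite !Rabs_mult, pow_1_abs, Rmult_1_l, Rabs_pos_eq by apply ones_trunc_nonneg.
    rewrite Rabs_inv, Rabs_pos_eq by lra.
    apply Rmult_le_compat_l; [apply ones_trunc_nonneg | apply Rinv_le_contravar; lra]. }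
  pose proof (is_lim_seq_minus' _ _ _ _ (is_lim_seq_plus' _ _ _ _ Hlog Hrec) Hlast) as Hrhs.
  rewrite Rminus_0_r in Hrhs.
  apply is_lim_seq_unique in Hsum. apply is_lim_seq_unique in Hrhs. rewrite Hsum in Hrhs.
  now injection Hrhs.
Qed.

(** * Comparison of B_m(l) with Q_m(l) *)

Definition tail_mix_error (N m l : nat) : R := signed_tail_mix N m l - q_series m l.

Lemma tail_mix_error_S_add N m l : (S l < N)%nat ->
  tail_mix_error N m l + tail_mix_error N m (S l)
  = match m with O => 0 | S m' => tail_mix_error N m' (S l) / INR (S l) end.
Proof.
  intros Hl. unfold tail_mix_error.
  pose proof (signed_tail_mix_S_add N m l Hl). pose proof (q_series_S_add m l).
  destruct m as [|m]; [lra|].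
  assert (INR (S l) <> 0) by (apply not_0_INR; lia).
  replace ((signed_tail_mix N m (S l) - q_series m (S l)) / INR (S l))
    with (signed_tail_mix N m (S l) / INR (S l) - q_series m (S l) / INR (S l)) by (field; auto).
  lra.
Qed.

Definition wallis_dual (l : nat) : R := (2 * INR l + 1) / wallis (S l).

Lemma wallis_dual_ge1 l : 1 <= wallis_dual l.
Proof.
  unfold wallis_dual. pose proof (wallis_sq_le l). pose proof (wallis_ge1 (S l)).
  apply Rcomplements.Rle_div_r; nra.
Qed.

Lemma wallis_dual_step l : 2 * wallis_dual l + wallis_dual (S l) / INR (S l) = 2 * wallis_dual (S l).
Proof.
  unfold wallis_dual. rewrite (wallis_S (S l)), !S_INR by lia.
  pose proof (pos_INR l). pose proof (wallis_ge1 (S l)). field. repeat split; lra.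
Qed.

Lemma wallis_dual_mul_le l : wallis_dual l * wallis l <= 2 * INR l + 1.
Proof.
  unfold wallis_dual. pose proof (wallis_le_S l). pose proof (wallis_ge1 l). pose proof (pos_INR l).
  replace (2 * INR l + 1) with ((2 * INR l + 1) / wallis (S l) * wallis (S l)) at 2 by (field; lra).
  apply Rmult_le_compat_l; [apply Rdiv_le_0_compat|]; lra.
Qed.

Definition tail_mix_error0 (N m : nat) : R := sumN (fun i => Rabs (tail_mix_error N i 0)) (S m).

Lemma tail_mix_error0_nonneg N m : 0 <= tail_mix_error0 N m.
Proof. apply sumN_nonneg. intros; apply Rabs_pos. Qed.

Lemma tail_mix_error0_le_S N m : tail_mix_error0 N m <= tail_mix_error0 N (S m).
Proof.
  unfold tail_mix_error0. rewrite (sumN_S _ (S m)).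
  pose proof (Rabs_pos (tail_mix_error N (S m) 0)). lra.
Qed.

(* Induction on [l]; the depth-[m-1] term is absorbed by [wallis_dual_step]. *)
Lemma tail_mix_error_bound N l : (l < N)%nat ->
  forall m, Rabs (tail_mix_error N m l) <= 2 ^ (m + 1) * wallis_dual l * tail_mix_error0 N m.
Proof.
  induction l as [|l IHl]; intros Hl m.
  - assert (Hw0 : wallis_dual 0 = 1) by (unfold wallis_dual; simpl; rewrite Rmult_0_r, Rinv_0; field).
    rewrite Hw0. unfold tail_mix_error0. rewrite sumN_S.
    pose proof (sumN_nonneg (fun i => Rabs (tail_mix_error N i 0)) m (fun i _ => Rabs_pos _)).
    pose proof (pow_R1_Rle 2 (m + 1) ltac:(lra)). pose proof (Rabs_pos (tail_mix_error N m 0)). nra.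
  - specialize (IHl ltac:(lia)).
    pose proof (wallis_dual_step l) as Hstep. pose proof (wallis_dual_ge1 (S l)).
    assert (HSl : 0 < INR (S l)) by (apply lt_0_INR; lia).
    assert (0 <= wallis_dual (S l) / INR (S l)) by (apply Rdiv_le_0_compat; lra).
    induction m as [|m IHm].
    + pose proof (tail_mix_error_S_add N 0 l Hl).
      replace (tail_mix_error N 0 (S l)) with (- tail_mix_error N 0 l) by lra. rewrite Rabs_Ropp.
      pose proof (IHl 0%nat). pose proof (tail_mix_error0_nonneg N 0). simpl pow in *. nra.
    + pose proof (tail_mix_error_S_add N (S m) l Hl).
      replace (tail_mix_error N (S m) (S l))
        with (tail_mix_error N m (S l) / INR (S l) - tail_mix_error N (S m) l) by lra.
      pose proof (tail_mix_error0_le_S N m). pose proof (tail_mix_error0_nonneg N m).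
      pose proof (pow_le 2 (m + 1) ltac:(lra)). pose proof (IHl (S m)).
      set (E := tail_mix_error0 N (S m)) in *.
      assert (Hm : Rabs (tail_mix_error N m (S l) / INR (S l))
                   <= 2 ^ (m + 1) * E * (wallis_dual (S l) / INR (S l))).
      { rewrite Rabs_div, (Rabs_pos_eq (INR (S l))) by lra. unfold Rdiv.
        rewrite <- Rmult_assoc. apply Rmult_le_compat_r; [apply Rlt_le, Rinv_0_lt_compat; lra|].
        eapply Rle_trans; [apply IHm|].
        replace (2 ^ (m + 1) * E * wallis_dual (S l)) with (2 ^ (m + 1) * wallis_dual (S l) * E) by ring.
        apply Rmult_le_compat_l; [apply Rmult_le_pos|]; lra. }
      replace (S m + 1)%nat with (S (m + 1)) in * by lia. simpl pow in *.
      assert (2 * 2 ^ (m + 1) * wallis_dual l * E + 2 ^ (m + 1) * E * (wallis_dual (S l) / INR (S l))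
              = 2 ^ (m + 1) * E * (2 * wallis_dual (S l))) by (rewrite <- Hstep; ring).
      eapply Rle_trans; [apply Rabs_triang|]. rewrite Rabs_Ropp. lra.
Qed.

Lemma sumN_alternating_binomial x n : (1 <= n)%nat ->
  sumN (fun i => (-1) ^ i * (x ^ i / INR (fact i)) * (x ^ (n - i) / INR (fact (n - i)))) (S n) = 0.
Proof.
  intros Hn. apply (Rmult_eq_reg_l (INR (fact n))); [|apply INR_fact_neq_0].
  rewrite Rmult_0_r, <- sumN_scal.
  transitivity (sum_f_R0 (fun i => Binomial.C n i * (- x) ^ i * x ^ (n - i)) n).
  - rewrite sum_f_R0_sumN. apply sumN_ext. intros i Hi. unfold Binomial.C.
    replace (- x) with (-1 * x) by ring. rewrite Rpow_mult_distr.
    pose proof (INR_fact_neq_0 i). pose proof (INR_fact_neq_0 (n - i)). field. auto.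
  - rewrite <- binomial. replace (- x + x) with 0 by ring. now apply pow_i.
Qed.

(* At [l = 0] the tails are complete alternating sums, whose limits cancel by [(ln 2 - ln 2)^(m+1) = 0]. *)
Lemma is_lim_seq_signed_tail_mix_0 m : is_lim_seq (fun N => signed_tail_mix N m 0) 0.
Proof.
  set (lim := sumN (fun i => ln2_coef i * log_power (S (m - i)) 1) (S m)).
  assert (HA : is_lim_seq (fun N => alt_tail_mix N m 0) lim).
  { apply (is_lim_seq_sumN (fun N i => ln2_coef i * alt_tail N (m - i) 0)). intros i _.
    apply is_lim_seq_scal, (is_lim_seq_ext (fun N => alt_poly (m - i) N 1)).
    - intros N. now rewrite alt_tail_at_0.
    - apply is_lim_seq_alt_poly. }
  assert (Hlim : (-1) ^ (0 + m + 1) * lim - (-1) ^ m * ln2_coef (S m) = 0).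
  { rewrite <- (sumN_alternating_binomial (ln 2) (S m)) by lia. rewrite sumN_S.
    fold (ln2_coef (S m)). rewrite Nat.sub_diag. change (ln 2 ^ 0 / INR (fact 0)) with (1 / 1).
    unfold lim. rewrite <- sumN_scal, <- tech_pow_Rmult.
    replace (sumN (fun i => (-1) ^ (0 + m + 1) * (ln2_coef i * log_power (S (m - i)) 1)) (S m))
      with (sumN (fun i => (-1) ^ i * (ln 2 ^ i / INR (fact i)) * (ln 2 ^ (S m - i) / INR (fact (S m - i)))) (S m));
      [field|].
    apply sumN_ext. intros i Hi. rewrite log_power_at_1. unfold ln2_coef.
    replace (S m - i)%nat with (S (m - i)) by lia.
    replace (0 + m + 1)%nat with (i + (m - i) + 1)%nat by lia. rewrite !pow_add.
    destruct (pow_neg1_cases (m - i)) as [->| ->]; ring. }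
  rewrite <- Hlim. unfold signed_tail_mix.
  apply is_lim_seq_minus'; [apply is_lim_seq_scal, HA | apply is_lim_seq_const].
Qed.

Lemma is_lim_seq_tail_mix_error0 m : is_lim_seq (fun N => tail_mix_error0 N m) 0.
Proof.
  unfold tail_mix_error0. rewrite <- (sumN_zero (S m)).
  apply (is_lim_seq_sumN (fun N i => Rabs (tail_mix_error N i 0))). intros i _.
  apply -> is_lim_seq_abs_0. unfold tail_mix_error. rewrite q_series_at_0.
  apply (is_lim_seq_ext (fun N => signed_tail_mix N i 0)); [intros; ring|].
  apply is_lim_seq_signed_tail_mix_0.
Qed.

Lemma Rabs_sumN_wallis_le (f : nat -> R) C N : 0 <= C ->
  (forall l, (l < N)%nat -> Rabs (f l) <= C * wallis_term l) -> Rabs (sumN f N) <= 4 * C.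
Proof.
  intros HC H. eapply Rle_trans; [apply Rabs_sumN_le|]. eapply Rle_trans; [apply sumN_le, H|].
  rewrite sumN_scal. pose proof (sumN_wallis_term_le N).
  pose proof (sumN_nonneg wallis_term N (fun l _ => wallis_term_nonneg l)). nra.
Qed.

Definition zeta_weight (k q l : nat) : R := ones_trunc k l / INR l ^ q.

Lemma zeta_weight_at_0 k q : (1 <= q)%nat -> zeta_weight k q 0 = 0.
Proof. intros Hq. unfold zeta_weight. simpl INR. rewrite pow_i by lia. unfold Rdiv. rewrite Rinv_0. ring. Qed.

Lemma zeta_weight_nonneg k q l : 0 <= zeta_weight k q l.
Proof.
  unfold zeta_weight, Rdiv. rewrite <- pow_inv.
  apply Rmult_le_pos; [apply ones_trunc_nonneg | apply pow_le, Rinv_INR_nonneg].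
Qed.

Lemma Rabs_signed_weight k q l x : Rabs ((-1) ^ l * zeta_weight k q l * x) = zeta_weight k q l * Rabs x.
Proof. rewrite !Rabs_mult, pow_1_abs, Rabs_pos_eq by apply zeta_weight_nonneg. ring. Qed.

Lemma zeta_weight_le_pow k q r l : (1 <= l)%nat -> (r <= q)%nat ->
  zeta_weight k q l <= 2 ^ k * wallis l / INR l ^ r.
Proof.
  intros Hl Hr. unfold zeta_weight. assert (1 <= INR l) by (apply (le_INR 1); lia).
  assert (INR l ^ r <= INR l ^ q) by (apply Rle_pow; auto).
  assert (0 < INR l ^ r) by (apply pow_lt; lra).
  pose proof (ones_trunc_le k l). pose proof (ones_trunc_nonneg k l).
  apply Rle_trans with (ones_trunc k l / INR l ^ r); unfold Rdiv.
  - apply Rmult_le_compat_l; [auto | apply Rinv_le_contravar; lra].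
  - apply Rmult_le_compat_r; [apply Rlt_le, Rinv_0_lt_compat|]; lra.
Qed.

Lemma zeta_weight_le k q l : (2 <= q)%nat -> zeta_weight k q l <= 2 ^ k * wallis_term l.
Proof.
  intros Hq. destruct l as [|l].
  - rewrite zeta_weight_at_0 by lia. pose proof (wallis_term_nonneg 0). pose proof (pow_le 2 k). nra.
  - unfold wallis_term. rewrite Rmult_div_assoc. apply zeta_weight_le_pow; lia.
Qed.

Lemma zeta_weight_mul_le k q l : (3 <= q)%nat -> zeta_weight k q l * INR l <= 2 ^ k * wallis_term l.
Proof.
  intros Hq. destruct l as [|l]; [simpl; pose proof (wallis_term_nonneg 0); pose proof (pow_le 2 k); nra|].
  assert (0 < INR (S l)) by (apply lt_0_INR; lia).
  apply Rle_trans with (2 ^ k * wallis (S l) / INR (S l) ^ 3 * INR (S l)).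
  - apply Rmult_le_compat_r; [lra | apply zeta_weight_le_pow; lia].
  - unfold wallis_term. right. field. lra.
Qed.

Lemma zeta_weight_dual_le k q l : (3 <= q)%nat ->
  zeta_weight k q l * wallis_dual l <= 3 * 2 ^ k * wallis_term l.
Proof.
  intros Hq. destruct l as [|l].
  - rewrite zeta_weight_at_0 by lia. pose proof (wallis_term_nonneg 0). pose proof (pow_le 2 k). nra.
  - set (x := INR (S l)). assert (Hx : 1 <= x) by (apply (le_INR 1); lia).
    pose proof (wallis_dual_ge1 (S l)). pose proof (wallis_dual_mul_le (S l)) as Hdw. fold x in Hdw.
    pose proof (wallis_ge1 (S l)). pose proof (pow_lt 2 k ltac:(lra)).
    apply Rle_trans with (2 ^ k * wallis (S l) / x ^ 3 * wallis_dual (S l)).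
    { apply Rmult_le_compat_r; [lra | apply zeta_weight_le_pow; lia]. }
    replace (2 ^ k * wallis (S l) / x ^ 3 * wallis_dual (S l))
      with (2 ^ k / x ^ 3 * (wallis_dual (S l) * wallis (S l))) by (field; lra).
    unfold wallis_term. fold x.
    apply Rle_trans with (2 ^ k / x ^ 3 * (3 * x)).
    { apply Rmult_le_compat_l; [apply Rdiv_le_0_compat; [lra | apply pow_lt; lra] | lra]. }
    replace (2 ^ k / x ^ 3 * (3 * x)) with (3 * 2 ^ k * (1 / x ^ 2)) by (field; lra).
    apply Rmult_le_compat_l; [lra|]. unfold Rdiv. apply Rmult_le_compat_r; [|lra].
    apply Rlt_le, Rinv_0_lt_compat, pow_lt; lra.
Qed.

Lemma mzv_trunc_neg_ones k q N : (1 <= q)%nat ->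
  mzv_trunc ((- Z.of_nat q)%Z :: ones k) N = sumN (fun l => (-1) ^ l * zeta_weight k q l) N.
Proof.
  intros Hq. rewrite mzv_trunc_cons. apply sumN_ext. intros [|l] _.
  - rewrite zeta_weight_at_0 by auto. simpl. ring.
  - simpl mzv_summand. rewrite mzv_term_neg by lia. unfold zeta_weight, ones_trunc, Rdiv. ring.
Qed.

Lemma mzv_trunc_alt_app k q N j : (1 <= q)%nat ->
  mzv_trunc ((-1)%Z :: ones j ++ Z.of_nat q :: ones k) N
  = sumN (fun l => zeta_weight k q l * alt_tail N j l) N.
Proof.
  intros Hq. rewrite app_comm_cons, mzv_trunc_app. apply sumN_ext. intros [|l] _.
  - rewrite zeta_weight_at_0 by auto. simpl. ring.
  - simpl mzv_summand. rewrite mzv_term_pos by lia. unfold zeta_weight, ones_trunc, alt_tail, Rdiv. ring.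
Qed.

(* [theorem4p1] reads [half_value m k (p+3) + (-1)^p half_value k m (p+3) = ...]. *)
Definition half_trunc (m k q N : nat) : R :=
  (-1) ^ (m + 1) * sumN (fun i => ln2_coef i * mzv_trunc ((-1)%Z :: ones (m - i) ++ Z.of_nat q :: ones k) N) (S m)
  - (-1) ^ m * ln2_coef (S m) * mzv_trunc ((- Z.of_nat q)%Z :: ones k) N.

Definition q_pairing (m k q N : nat) : R :=
  sumN (fun l => (-1) ^ l * zeta_weight k q l * q_partial m l N) N.

Lemma half_trunc_eq m k q N : (1 <= q)%nat ->
  half_trunc m k q N = sumN (fun l => (-1) ^ l * zeta_weight k q l * signed_tail_mix N m l) N.
Proof.
  intros Hq. unfold half_trunc. rewrite mzv_trunc_neg_ones by auto.
  rewrite (sumN_ext _ (fun i => sumN (fun l => ln2_coef i * (zeta_weight k q l * alt_tail N (m - i) l)) N))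
    by (intros; rewrite mzv_trunc_alt_app, <- sumN_scal by auto; reflexivity).
  rewrite sumN_swap, <- !sumN_scal, <- sumN_minus. apply sumN_ext. intros l _.
  unfold signed_tail_mix, alt_tail_mix.
  rewrite <- (sumN_ext (fun i => zeta_weight k q l * (ln2_coef i * alt_tail N (m - i) l)))
    by (intros; ring).
  rewrite sumN_scal, !pow_add. destruct (pow_neg1_cases l) as [->| ->]; ring.
Qed.

Lemma Rabs_sumN_weighted_error_le m k q N : (3 <= q)%nat ->
  Rabs (sumN (fun l => (-1) ^ l * zeta_weight k q l * tail_mix_error N m l) N)
  <= 4 * (3 * 2 ^ k * (2 ^ (m + 1) * tail_mix_error0 N m)).
Proof.
  intros Hq. pose proof (pow_le 2 k ltac:(lra)). pose proof (pow_le 2 (m + 1) ltac:(lra)).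
  pose proof (tail_mix_error0_nonneg N m).
  apply Rabs_sumN_wallis_le; [apply Rmult_le_pos; [lra | apply Rmult_le_pos; lra]|].
  intros l Hl. rewrite Rabs_signed_weight.
  pose proof (tail_mix_error_bound N l Hl m). pose proof (zeta_weight_dual_le k q l Hq).
  pose proof (zeta_weight_nonneg k q l). pose proof (wallis_dual_ge1 l). pose proof (wallis_term_nonneg l).
  apply Rle_trans with (zeta_weight k q l * wallis_dual l * (2 ^ (m + 1) * tail_mix_error0 N m)).
  - replace (zeta_weight k q l * wallis_dual l * (2 ^ (m + 1) * tail_mix_error0 N m))
      with (zeta_weight k q l * (2 ^ (m + 1) * wallis_dual l * tail_mix_error0 N m)) by ring.
    apply Rmult_le_compat_l; lra.
  - replace (3 * 2 ^ k * (2 ^ (m + 1) * tail_mix_error0 N m) * wallis_term l)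
      with (3 * 2 ^ k * wallis_term l * (2 ^ (m + 1) * tail_mix_error0 N m)) by ring.
    apply Rmult_le_compat_r; [apply Rmult_le_pos|]; lra.
Qed.

Lemma Rabs_sumN_weighted_q_tail_le m k q N : (3 <= q)%nat ->
  Rabs (sumN (fun l => (-1) ^ l * zeta_weight k q l * (q_series m l - q_partial m l N)) N)
  <= 4 * (2 ^ k * (2 ^ m * wallis_tail N)).
Proof.
  intros Hq. pose proof (pow_le 2 k ltac:(lra)). pose proof (pow_le 2 m ltac:(lra)).
  pose proof (wallis_tail_nonneg N).
  apply Rabs_sumN_wallis_le; [apply Rmult_le_pos; [lra | apply Rmult_le_pos; lra]|].
  intros l Hl. rewrite Rabs_signed_weight.
  pose proof (q_series_tail_bound m l N ltac:(lia)). pose proof (zeta_weight_mul_le k q l Hq).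
  pose proof (zeta_weight_nonneg k q l). pose proof (pos_INR l). pose proof (wallis_term_nonneg l).
  apply Rle_trans with (zeta_weight k q l * INR l * (2 ^ m * wallis_tail N)).
  - replace (zeta_weight k q l * INR l * (2 ^ m * wallis_tail N))
      with (zeta_weight k q l * (INR l * 2 ^ m * wallis_tail N)) by ring.
    apply Rmult_le_compat_l; lra.
  - replace (2 ^ k * (2 ^ m * wallis_tail N) * wallis_term l)
      with (2 ^ k * wallis_term l * (2 ^ m * wallis_tail N)) by ring.
    apply Rmult_le_compat_r; [apply Rmult_le_pos|]; lra.
Qed.

Lemma is_lim_seq_half_trunc_sub_q_pairing m k q : (3 <= q)%nat ->
  is_lim_seq (fun N => half_trunc m k q N - q_pairing m k q N) 0.
Proof.
  intros Hq.
  apply (is_lim_seq_ext (fun N => sumN (fun l => (-1) ^ l * zeta_weight k q l * tail_mix_error N m l) N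
                                 + sumN (fun l => (-1) ^ l * zeta_weight k q l * (q_series m l - q_partial m l N)) N)).
  { intros N. rewrite half_trunc_eq by lia. unfold q_pairing, tail_mix_error.
    rewrite <- sumN_plus, <- sumN_minus. apply sumN_ext. intros; ring. }
  apply is_lim_seq_abs_0.
  apply (is_lim_seq_le_le (fun _ => 0) _
    (fun N => 4 * (3 * 2 ^ k * (2 ^ (m + 1) * tail_mix_error0 N m)) + 4 * (2 ^ k * (2 ^ m * wallis_tail N)))).
  - intros N. split; [apply Rabs_pos|]. eapply Rle_trans; [apply Rabs_triang|].
    apply Rplus_le_compat; [apply Rabs_sumN_weighted_error_le | apply Rabs_sumN_weighted_q_tail_le]; auto.
  - apply is_lim_seq_const.
  - replace (Finite 0) with (Finite (4 * (3 * 2 ^ k * (2 ^ (m + 1) * 0)) + 4 * (2 ^ k * (2 ^ m * 0))))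
      by (f_equal; ring).
    apply is_lim_seq_plus'; repeat apply is_lim_seq_scal.
    + apply is_lim_seq_tail_mix_error0.
    + apply is_lim_seq_wallis_tail.
Qed.

Lemma is_lim_seq_mzv s : ex_finite_lim_seq (mzv_trunc s) -> is_lim_seq (mzv_trunc s) (mzv s).
Proof.
  intros [l Hl]. unfold mzv. change (fun N => mzv_trunc s N) with (mzv_trunc s).
  now rewrite (is_lim_seq_unique _ _ Hl).
Qed.

Lemma ex_lim_mzv_neg_ones k q : (2 <= q)%nat -> ex_finite_lim_seq (mzv_trunc ((- Z.of_nat q)%Z :: ones k)).
Proof.
  intros Hq. destruct (ex_lim_seq_of_wallis_increments (mzv_trunc ((- Z.of_nat q)%Z :: ones k)) (2 ^ k))
    as [L [HL _]]; [apply pow_le; lra| |now exists L].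
  intros n _. rewrite !mzv_trunc_neg_ones by lia. rewrite sumN_S.
  replace (sumN (fun l => (-1) ^ l * zeta_weight k q l) n + (-1) ^ n * zeta_weight k q n
           - sumN (fun l => (-1) ^ l * zeta_weight k q l) n) with ((-1) ^ n * zeta_weight k q n * 1) by ring.
  rewrite Rabs_signed_weight, Rabs_R1, Rmult_1_r. now apply zeta_weight_le.
Qed.

Lemma Rabs_q_partial_le m l N : Rabs (q_partial m l N) <= 4 * (INR l * 2 ^ m).
Proof.
  apply Rabs_sumN_wallis_le; [|intros; apply q_summand_bound].
  apply Rmult_le_pos; [apply pos_INR | apply pow_le; lra].
Qed.

Lemma ex_lim_q_pairing m k q : (3 <= q)%nat -> ex_finite_lim_seq (q_pairing m k q).
Proof.
  intros Hq. pose proof (pow_le 2 m ltac:(lra)). pose proof (pow_le 2 k ltac:(lra)).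
  destruct (ex_lim_seq_of_wallis_increments (q_pairing m k q) (8 * 2 ^ m * 2 ^ k)) as [L [HL _]];
    [nra| |now exists L].
  intros n Hn. pose proof (wallis_term_nonneg n).
  assert (Hstep : q_pairing m k q (S n) - q_pairing m k q n
    = sumN (fun l => (-1) ^ l * zeta_weight k q l * q_summand m l n) n
      + (-1) ^ n * zeta_weight k q n * q_partial m n (S n)).
  { unfold q_pairing. rewrite sumN_S.
    rewrite (sumN_ext (fun l => (-1) ^ l * zeta_weight k q l * q_partial m l (S n))
      (fun l => (-1) ^ l * zeta_weight k q l * q_partial m l n + (-1) ^ l * zeta_weight k q l * q_summand m l n))
      by (intros; unfold q_partial; rewrite sumN_S; ring).
    rewrite sumN_plus. ring. }
  rewrite Hstep. eapply Rle_trans; [apply Rabs_triang|].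
  assert (Rabs (sumN (fun l => (-1) ^ l * zeta_weight k q l * q_summand m l n) n)
          <= 4 * (2 ^ m * wallis_term n * 2 ^ k)).
  { apply Rabs_sumN_wallis_le; [apply Rmult_le_pos; [apply Rmult_le_pos|]; lra|].
    intros l _. rewrite Rabs_signed_weight.
    pose proof (q_summand_bound m l n). pose proof (zeta_weight_mul_le k q l Hq).
    pose proof (zeta_weight_nonneg k q l).
    apply Rle_trans with (zeta_weight k q l * INR l * (2 ^ m * wallis_term n)).
    - replace (zeta_weight k q l * INR l * (2 ^ m * wallis_term n))
        with (zeta_weight k q l * (INR l * 2 ^ m * wallis_term n)) by ring.
      apply Rmult_le_compat_l; lra.
    - replace (2 ^ m * wallis_term n * 2 ^ k * wallis_term l)
        with (2 ^ k * wallis_term l * (2 ^ m * wallis_term n)) by ring.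
      apply Rmult_le_compat_r; [apply Rmult_le_pos|]; lra. }
  assert (Rabs ((-1) ^ n * zeta_weight k q n * q_partial m n (S n)) <= 4 * 2 ^ m * (2 ^ k * wallis_term n)).
  { rewrite Rabs_signed_weight. pose proof (Rabs_q_partial_le m n (S n)).
    pose proof (zeta_weight_mul_le k q n Hq). pose proof (zeta_weight_nonneg k q n).
    apply Rle_trans with (zeta_weight k q n * (4 * (INR n * 2 ^ m))); [apply Rmult_le_compat_l; lra|].
    replace (zeta_weight k q n * (4 * (INR n * 2 ^ m))) with (4 * 2 ^ m * (zeta_weight k q n * INR n)) by ring.
    apply Rmult_le_compat_l; lra. }
  lra.
Qed.

Lemma ex_lim_half_trunc m k q : (3 <= q)%nat -> ex_finite_lim_seq (half_trunc m k q).
Proof.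
  intros Hq. destruct (ex_lim_q_pairing m k q Hq) as [s Hs]. exists (0 + s).
  apply (is_lim_seq_ext (fun N => (half_trunc m k q N - q_pairing m k q N) + q_pairing m k q N));
    [intros; ring|].
  apply is_lim_seq_plus'; [apply is_lim_seq_half_trunc_sub_q_pairing; auto | exact Hs].
Qed.

Lemma ex_finite_lim_seq_sumN (f : nat -> nat -> R) M :
  (forall j, (j < M)%nat -> ex_finite_lim_seq (fun N => f N j)) ->
  ex_finite_lim_seq (fun N => sumN (f N) M).
Proof.
  induction M as [|M IH]; intros H; [exists 0; apply is_lim_seq_const|].
  destruct IH as [r Hr]; [intros; apply H; lia|]. destruct (H M ltac:(lia)) as [y Hy].
  exists (r + y). apply is_lim_seq_plus'; auto.
Qed.

(* Solving [half_trunc] for its [i = 0] term gives convergence by induction on the depth [j]. *)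
Lemma ex_lim_mzv_alt_app k q j : (3 <= q)%nat ->
  ex_finite_lim_seq (mzv_trunc ((-1)%Z :: ones j ++ Z.of_nat q :: ones k)).
Proof.
  intros Hq. induction j as [j IH] using lt_wf_ind.
  set (Y := fun N i => mzv_trunc ((-1)%Z :: ones i ++ Z.of_nat q :: ones k) N).
  destruct (ex_lim_half_trunc j k q Hq) as [x Hx].
  destruct (ex_lim_mzv_neg_ones k q ltac:(lia)) as [z Hz].
  destruct (ex_finite_lim_seq_sumN (fun N i => ln2_coef (S i) * Y N (j - S i)%nat) j) as [r Hr].
  { intros i Hi. destruct (IH (j - S i)%nat ltac:(lia)) as [y Hy].
    exists (ln2_coef (S i) * y). apply is_lim_seq_scal, Hy. }
  exists ((-1) ^ (j + 1) * (x + (-1) ^ j * ln2_coef (S j) * z) - r).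
  apply (is_lim_seq_ext (fun N => (-1) ^ (j + 1) * (half_trunc j k q N
            + (-1) ^ j * ln2_coef (S j) * mzv_trunc ((- Z.of_nat q)%Z :: ones k) N)
            - sumN (fun i => ln2_coef (S i) * Y N (j - S i)%nat) j)).
  - intros N. unfold half_trunc. rewrite sumN_shift, Nat.sub_0_r.
    replace (ln2_coef 0) with 1 by (unfold ln2_coef; simpl; field).
    unfold Y. destruct (pow_neg1_cases (j + 1)) as [->| ->]; ring.
  - apply is_lim_seq_minus'; [|exact Hr].
    apply is_lim_seq_scal, is_lim_seq_plus'; [exact Hx|]. apply is_lim_seq_scal, Hz.
Qed.

(** * Partial fractions and the theorem *)

Lemma alt_geom_sum_mul x y p :
  (x + y) * sumN (fun i => (-1) ^ i * x ^ (p - i) * y ^ i) (S p) = x ^ (p + 1) + (-1) ^ p * y ^ (p + 1).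
Proof.
  induction p as [|p IH]; [simpl; ring|].
  rewrite sumN_S, Nat.sub_diag.
  rewrite (sumN_ext (fun i => (-1) ^ i * x ^ (S p - i) * y ^ i) (fun i => x * ((-1) ^ i * x ^ (p - i) * y ^ i)))
    by (intros i Hi; replace (S p - i)%nat with (S (p - i)) by lia; simpl; ring).
  rewrite sumN_scal.
  replace ((x + y) * (x * sumN (fun i => (-1) ^ i * x ^ (p - i) * y ^ i) (S p) + (-1) ^ S p * x ^ 0 * y ^ S p))
    with (x * ((x + y) * sumN (fun i => (-1) ^ i * x ^ (p - i) * y ^ i) (S p)) + (x + y) * ((-1) ^ S p * y ^ S p))
    by (simpl; ring).
  rewrite IH, !Nat.add_1_r. simpl. ring.
Qed.

Lemma partial_fractions x y p : 0 < x -> 0 < y ->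
  1 / (y ^ (p + 2) * x * (x + y)) + (-1) ^ p / (x ^ (p + 2) * y * (x + y))
  = sumN (fun i => (-1) ^ i / (x ^ (2 + i) * y ^ (p + 2 - i))) (S p).
Proof.
  intros Hx Hy.
  assert (Hxy : forall a b, 0 < x ^ a * y ^ b) by (intros; apply Rmult_lt_0_compat; apply pow_lt; lra).
  rewrite (sumN_ext _ (fun i => / (x ^ (p + 2) * y ^ (p + 2)) * ((-1) ^ i * x ^ (p - i) * y ^ i))).
  2:{ intros i Hi.
      replace (x ^ (p + 2)) with (x ^ (2 + i) * x ^ (p - i)) by (rewrite <- pow_add; f_equal; lia).
      replace (y ^ (p + 2)) with (y ^ (p + 2 - i) * y ^ i) by (rewrite <- pow_add; f_equal; lia).
      pose proof (Hxy (2 + i)%nat (p + 2 - i)%nat). pose proof (Hxy (p - i)%nat i).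
      field. repeat split; apply pow_nonzero; lra. }
  rewrite sumN_scal. apply (Rmult_eq_reg_l (x + y)); [|lra].
  rewrite (Rmult_comm (/ _)), <- Rmult_assoc, alt_geom_sum_mul.
  replace (p + 2)%nat with (S (p + 1)) by lia. simpl pow.
  pose proof (Hxy (p + 1)%nat (p + 1)%nat). field.
  repeat split; try lra; apply pow_nonzero; lra.
Qed.

Lemma q_pairing_summand_sym m k p n l :
  (-1) ^ l * zeta_weight k (p + 3) l * q_summand m l n
    + (-1) ^ p * ((-1) ^ n * zeta_weight m (p + 3) n * q_summand k n l)
  = sumN (fun i => (-1) ^ i * ((-1) ^ n * zeta_weight m (2 + i) n) * ((-1) ^ l * zeta_weight k (p + 2 - i) l)) (S p).
Proof.
  destruct n as [|n].
  { rewrite zeta_weight_at_0, q_summand_0 by lia.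
    rewrite (sumN_ext _ (fun _ => 0)) by (intros; rewrite zeta_weight_at_0 by lia; ring).
    rewrite sumN_zero. ring. }
  destruct l as [|l].
  { rewrite zeta_weight_at_0, q_summand_0 by lia.
    rewrite (sumN_ext _ (fun _ => 0)) by (intros; rewrite (zeta_weight_at_0 k) by lia; ring).
    rewrite sumN_zero. ring. }
  set (x := INR (S n)). set (y := INR (S l)).
  assert (Hx : 0 < x) by (apply lt_0_INR; lia). assert (Hy : 0 < y) by (apply lt_0_INR; lia).
  unfold q_summand, zeta_weight. fold x y.
  rewrite (sumN_ext _ (fun i => ((-1) ^ S n * (-1) ^ S l * ones_trunc m (S n) * ones_trunc k (S l))
                                 * ((-1) ^ i / (x ^ (2 + i) * y ^ (p + 2 - i))))).
  2:{ intros i Hi. assert (0 < x ^ (2 + i)) by (apply pow_lt; lra).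
      assert (0 < y ^ (p + 2 - i)) by (apply pow_lt; lra). field. lra. }
  rewrite sumN_scal, <- partial_fractions by auto.
  replace (p + 3)%nat with (S (p + 2)) by lia. simpl pow.
  assert (0 < x ^ (p + 2)) by (apply pow_lt; lra). assert (0 < y ^ (p + 2)) by (apply pow_lt; lra).
  field. repeat split; lra.
Qed.

Lemma q_pairing_sym m k p N :
  q_pairing m k (p + 3) N + (-1) ^ p * q_pairing k m (p + 3) N
  = sumN (fun i => (-1) ^ i * mzv_trunc ((- Z.of_nat (2 + i))%Z :: ones m) N
                     * mzv_trunc ((- Z.of_nat (p + 2 - i))%Z :: ones k) N) (S p).
Proof.
  set (T := fun i n l => (-1) ^ i * ((-1) ^ n * zeta_weight m (2 + i) n) * ((-1) ^ l * zeta_weight k (p + 2 - i) l)).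
  transitivity (sumN (fun n => sumN (fun l => sumN (fun i => T i n l) (S p)) N) N).
  - unfold q_pairing, q_partial.
    rewrite (sumN_ext (fun l => (-1) ^ l * zeta_weight k (p + 3) l * sumN (q_summand m l) N)
               (fun l => sumN (fun n => (-1) ^ l * zeta_weight k (p + 3) l * q_summand m l n) N))
      by (intros; symmetry; apply sumN_scal).
    rewrite sumN_swap, <- sumN_scal, <- sumN_plus. apply sumN_ext. intros n _.
    rewrite <- sumN_scal, <- sumN_scal, <- sumN_plus. apply sumN_ext. intros l _.
    apply q_pairing_summand_sym.
  - symmetry. rewrite (sumN_ext _ (fun i => sumN (fun n => sumN (fun l => T i n l) N) N)).
    + rewrite sumN_swap. apply sumN_ext. intros n _. apply sumN_swap.
    + intros i Hi. rewrite !mzv_trunc_neg_ones by lia.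
      rewrite Rmult_assoc, sumN_mult, <- sumN_scal. apply sumN_ext. intros n _.
      rewrite <- sumN_scal. apply sumN_ext. intros l _. unfold T. ring.
Qed.

Definition half_value (m k q : nat) : R :=
  (-1) ^ (m + 1) * sumN (fun i => ln2_coef i * mzv ((-1)%Z :: ones (m - i) ++ Z.of_nat q :: ones k)) (S m)
  - (-1) ^ m * ln2_coef (S m) * mzv ((- Z.of_nat q)%Z :: ones k).

Lemma is_lim_seq_half_trunc m k q : (3 <= q)%nat -> is_lim_seq (half_trunc m k q) (half_value m k q).
Proof.
  intros Hq. unfold half_trunc, half_value. apply is_lim_seq_minus'.
  - apply is_lim_seq_scal.
    apply (is_lim_seq_sumN (fun N i => ln2_coef i * mzv_trunc ((-1)%Z :: ones (m - i) ++ Z.of_nat q :: ones k) N)).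
    intros i _. apply is_lim_seq_scal, is_lim_seq_mzv, ex_lim_mzv_alt_app, Hq.
  - apply is_lim_seq_scal, is_lim_seq_mzv, ex_lim_mzv_neg_ones. lia.
Qed.

Lemma half_value_sym m k p :
  half_value m k (p + 3) + (-1) ^ p * half_value k m (p + 3)
  = sumN (fun i => (-1) ^ i * mzv ((- Z.of_nat (2 + i))%Z :: ones m)
                     * mzv ((- Z.of_nat (p + 2 - i))%Z :: ones k)) (S p).
Proof.
  set (q := (p + 3)%nat). assert (Hq : (3 <= q)%nat) by (unfold q; lia).
  set (F := fun N => half_trunc m k q N + (-1) ^ p * half_trunc k m q N).
  assert (Hhalves : is_lim_seq F (half_value m k q + (-1) ^ p * half_value k m q)).
  { apply is_lim_seq_plus'; [|apply is_lim_seq_scal]; now apply is_lim_seq_half_trunc. }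
  assert (Hproducts : is_lim_seq F (0 + (-1) ^ p * 0 + sumN (fun i => (-1) ^ i * mzv ((- Z.of_nat (2 + i))%Z :: ones m)
                                                     * mzv ((- Z.of_nat (p + 2 - i))%Z :: ones k)) (S p))).
  { apply (is_lim_seq_ext (fun N => (half_trunc m k q N - q_pairing m k q N)
                                    + (-1) ^ p * (half_trunc k m q N - q_pairing k m q N)
                                    + (q_pairing m k q N + (-1) ^ p * q_pairing k m q N))).
    - intros N. unfold F. ring.
    - apply is_lim_seq_plus'.
      + apply is_lim_seq_plus'; [|apply is_lim_seq_scal]; now apply is_lim_seq_half_trunc_sub_q_pairing.
      + apply (is_lim_seq_ext (fun N => sumN (fun i => (-1) ^ i * mzv_trunc ((- Z.of_nat (2 + i))%Z :: ones m) N
                                          * mzv_trunc ((- Z.of_nat (p + 2 - i))%Z :: ones k) N) (S p)));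
          [intros; unfold q; symmetry; apply q_pairing_sym|].
        apply (is_lim_seq_sumN (fun N i => (-1) ^ i * mzv_trunc ((- Z.of_nat (2 + i))%Z :: ones m) N
                                          * mzv_trunc ((- Z.of_nat (p + 2 - i))%Z :: ones k) N)).
        intros i Hi. apply is_lim_seq_mult'; [apply is_lim_seq_scal|];
          apply is_lim_seq_mzv, ex_lim_mzv_neg_ones; lia. }
  apply is_lim_seq_unique in Hhalves. apply is_lim_seq_unique in Hproducts. rewrite Hhalves in Hproducts.
  apply Rbar_finite_eq in Hproducts. lra.
Qed.

Theorem theorem4p1 (m k p : nat) :
  (-1) ^ (m + 1) *
    sum_f_R0 (fun i => ln 2 ^ i / INR (fact i) *
       mzv ((-1)%Z :: ones (m - i) ++ (Z.of_nat p + 3)%Z :: ones k)) m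
  + (-1) ^ (p + k + 1) *
    sum_f_R0 (fun i => ln 2 ^ i / INR (fact i) *
       mzv ((-1)%Z :: ones (k - i) ++ (Z.of_nat p + 3)%Z :: ones m)) k
  =
  (-1) ^ m / INR (fact (m + 1)) * ln 2 ^ (m + 1) *
     mzv ((- (Z.of_nat p + 3))%Z :: ones k)
  + (-1) ^ (p + k) / INR (fact (k + 1)) * ln 2 ^ (k + 1) *
     mzv ((- (Z.of_nat p + 3))%Z :: ones m)
  + sum_f_R0 (fun i => (-1) ^ i *
       mzv ((- (2 + Z.of_nat i))%Z :: ones m) *
       mzv ((- (Z.of_nat p + 2 - Z.of_nat i))%Z :: ones k)) p.
Proof.
  pose proof (half_value_sym m k p) as H. unfold half_value, ln2_coef in H.
  replace (Z.of_nat (p + 3)) with (Z.of_nat p + 3)%Z in H by lia.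
  rewrite !sum_f_R0_sumN.
  rewrite (sumN_ext (fun i => (-1) ^ i * mzv ((- (2 + Z.of_nat i))%Z :: ones m)
                                 * mzv ((- (Z.of_nat p + 2 - Z.of_nat i))%Z :: ones k))
                    (fun i => (-1) ^ i * mzv ((- Z.of_nat (2 + i))%Z :: ones m)
                                 * mzv ((- Z.of_nat (p + 2 - i))%Z :: ones k))).
  2:{ intros i Hi. do 3 f_equal; f_equal; lia. }
  replace (p + k + 1)%nat with (p + (k + 1))%nat by lia.
  rewrite <- H, !(pow_add (-1) p), !Nat.add_1_r. unfold Rdiv. ring.
Qed.
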